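(* Fix $c\neq0$. For $m\in[0,1)$, the cnoidal profile $p_{m,V}$ has zero average, $\int_0^{2\pi}p_{m,V}(x)\,dx=0$, if and only if $V=V_0(m):=\frac{2E(m)}{K(m)}-\frac{4-2m}{3}$. Let $m^*\in(0,1)$ be the solution of $E(m^* )/K(m^* )=\frac12$ ($m^*\approx0.8261$). Then the point $(m,V_0(m))$ satisfies $V_0(m)>-\frac{m+1}{3}$ for all $m\in[0,1)$, $V_0(m)=\frac{2m-1}{3}$ exactly when $m=m^*$, and $V_0(m)<\frac{2m-1}{3}$ (so that $(m,V_0(m))$ lies in the region $-\frac{m+1}{3}<V<\frac{2m-1}{3}$, where the profile is not Virasoro-conjugate to any constant) for $m\in(m^*,1)$.
   Context: $K(m)=\int_0^{\pi/2}(1-m\sin^2\theta)^{-1/2}d\theta$ and $E(m)=\int_0^{\pi/2}(1-m\sin^2\theta)^{1/2}d\theta$ are the complete elliptic integrals of the first and second kind. The cnoidal profile is $p_{m,V}(x)=\frac{cK(m)^2}{3\pi^2}\big[\frac V2-\frac{m+1}3+m\,\mathrm{sn}^2(\frac{K(m)}{\pi}x|m)\big]$ with $\mathrm{sn}(\cdot|m)$ the Jacobi elliptic sine. A $2\pi$-periodic profile $p$ is Virasoro-conjugate to a constant $k$ if $p=f\cdot k$ for some smooth $f:\mathbb{R}\to\mathbb{R}$ with $f'>0$ and $f(x+2\pi)=f(x)+2\pi$, where $(f\cdot q)(f(x))=f'(x)^{-2}[q(x)+\frac c{12}\mathsf{S}[f](x)]$ and $\mathsf{S}[f]=\frac{f'''}{f'}-\frac32(\frac{f''}{f'})^2$.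 *)

From Stdlib Require Import Reals ClassicalEpsilon.
From Coquelicot Require Import Coquelicot.
Open Scope R_scope.

Definition ellK (m : R) : R :=
  RInt (fun t => / sqrt (1 - m * (sin t) ^ 2)) 0 (PI / 2).

Definition ellE (m : R) : R :=
  RInt (fun t => sqrt (1 - m * (sin t) ^ 2)) 0 (PI / 2).

Definition ellF (phi m : R) : R :=
  RInt (fun t => / sqrt (1 - m * (sin t) ^ 2)) 0 phi.

(* Jacobi amplitude am(u|m): the phi with F(phi|m) = u (unique for m < 1,
   since F(.|m) is then a strictly increasing bijection of R). *)
Definition jacobi_am (u m : R) : R :=
  epsilon (inhabits 0) (fun phi => ellF phi m = u).

Definition jacobi_sn (u m : R) : R := sin (jacobi_am u m).

Definition cnoidal (c m V x : R) : R :=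
  c * (ellK m) ^ 2 / (3 * PI ^ 2) *
  (V / 2 - (m + 1) / 3 + m * (jacobi_sn (ellK m / PI * x) m) ^ 2).

Definition V0 (m : R) : R := 2 * ellE m / ellK m - (4 - 2 * m) / 3.

From Stdlib Require Import Reals Lra ClassicalEpsilon.
From Coquelicot Require Import Coquelicot.
Open Scope R_scope.

(* Since [F(.|m)' = 1 / sqrt (1 - m sin^2) >= 1], the map [phi |-> F(phi|m)] is an expanding
   bijection of R, so [jacobi_am] is its inverse.  Substituting [u = F(phi|m)] and using
   [m sin^2 / s = 1/s - s] for [s = sqrt (1 - m sin^2)] gives [m * int_0^(2K) sn^2 = 2K - 2E],
   hence the mean of [p_{m,V}] vanishes exactly at [V = V0 m].  Since
   [V0 m - (2m - 1)/3 = 2 (E/K - 1/2)], the rest is about [E/K]: it equals 1 at [m = 0], is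
   strictly decreasing ([E] decreases, [K] increases) and continuous on [[0,1)], and the bounds
   [E <= 1 + 1/25] and [K > 2 (1 + 1/25)] at [m = 0.999] push it below [1/2], so [m*] exists by
   the intermediate value theorem. *)

(* Coquelicot states [RInt] equations in the carrier of [R_CompleteNormedModule], which
   [ring] and [field] do not recognise as [R]. *)
Ltac change_to_R_eq := match goal with |- ?a = ?b => change (@eq R a b) end.

Definition ellK_integrand (m t : R) : R := / sqrt (1 - m * sin t ^ 2).
Definition ellE_integrand (m t : R) : R := sqrt (1 - m * sin t ^ 2).

Lemma sin_sqr_bound t : 0 <= sin t ^ 2 <= 1.
Proof. pose proof (SIN_bound t). split; nra. Qed.

Lemma radicand_pos m t : m < 1 -> 0 < 1 - m * sin t ^ 2.
Proof. intros. pose proof (sin_sqr_bound t). destruct (Rle_dec 0 m); nra. Qed.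

Lemma ellE_integrand_pos m t : m < 1 -> 0 < ellE_integrand m t.
Proof. intros Hm. apply sqrt_lt_R0, radicand_pos, Hm. Qed.

Lemma ellE_integrand_sqr m t : m < 1 -> ellE_integrand m t * ellE_integrand m t = 1 - m * sin t ^ 2.
Proof. intros Hm. apply sqrt_sqrt, Rlt_le, radicand_pos, Hm. Qed.

Lemma ellK_integrand_continuous m t : m < 1 -> continuous (ellK_integrand m) t.
Proof.
  intros Hm. apply (ex_derive_continuous (V := R_NormedModule)). unfold ellK_integrand.
  pose proof (radicand_pos m t Hm). auto_derive.
  split; [lra|]. split; [|exact I]. apply Rgt_not_eq, sqrt_lt_R0. lra.
Qed.

Lemma ellE_integrand_continuous m t : m < 1 -> continuous (ellE_integrand m) t.
Proof.
  intros Hm. apply (ex_derive_continuous (V := R_NormedModule)). unfold ellE_integrand.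
  pose proof (radicand_pos m t Hm). auto_derive. lra.
Qed.

Lemma ex_RInt_continuous_everywhere (f : R -> R) a b :
  (forall t, continuous f t) -> ex_RInt f a b.
Proof. intros Hf. apply (ex_RInt_continuous (V := R_CompleteNormedModule)). intros; apply Hf. Qed.

Lemma RInt_scal_R (f : R -> R) a b k : ex_RInt f a b -> RInt (fun t => k * f t) a b = k * RInt f a b.
Proof. exact (RInt_scal (V := R_CompleteNormedModule) f a b k). Qed.

Lemma RInt_minus_R (f g : R -> R) a b : ex_RInt f a b -> ex_RInt g a b ->
  RInt (fun t => f t - g t) a b = RInt f a b - RInt g a b.
Proof. exact (RInt_minus (V := R_CompleteNormedModule) f g a b). Qed.

Lemma RInt_const_add_scal (g : R -> R) p q a b : ex_RInt g a b ->
  RInt (fun x => p + q * g x) a b = (b - a) * p + q * RInt g a b.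
Proof.
  intros Hg. rewrite <- RInt_scal_R by exact Hg.
  replace ((b - a) * p) with (RInt (fun _ => p) a b) by (rewrite RInt_const; reflexivity).
  change (RInt (fun _ => p) a b + RInt (fun x => q * g x) a b)
    with (plus (RInt (fun _ => p) a b) (RInt (fun x => q * g x) a b)).
  apply (RInt_plus (V := R_CompleteNormedModule)); [apply ex_RInt_const|].
  apply (ex_RInt_scal (V := R_CompleteNormedModule)), Hg.
Qed.

Lemma RInt_rescale (f : R -> R) k b : (forall u, continuous f u) ->
  k * RInt (fun x => f (k * x)) 0 b = RInt f 0 (k * b).
Proof.
  intros Hf.
  assert (Hcomp : forall x, continuous (fun x => f (k * x)) x).
  { intros x. apply (continuous_comp (fun x => k * x) f); [|apply Hf].
    apply (ex_derive_continuous (V := R_NormedModule)). auto_derive. exact I. }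
  rewrite <- RInt_scal_R by (apply ex_RInt_continuous_everywhere, Hcomp).
  transitivity (RInt (fun x => scal k (f (k * x + 0))) 0 b).
  { apply RInt_ext. intros; rewrite Rplus_0_r; reflexivity. }
  replace (RInt f 0 (k * b)) with (RInt f (k * 0 + 0) (k * b + 0))
    by (rewrite Rmult_0_r, !Rplus_0_r; reflexivity).
  apply (RInt_comp_lin (V := R_CompleteNormedModule)), ex_RInt_continuous_everywhere, Hf.
Qed.

Lemma ex_RInt_ellK_integrand m a b : m < 1 -> ex_RInt (ellK_integrand m) a b.
Proof. intros Hm. apply ex_RInt_continuous_everywhere. intros; apply ellK_integrand_continuous, Hm. Qed.

Lemma ex_RInt_ellE_integrand m a b : m < 1 -> ex_RInt (ellE_integrand m) a b.
Proof. intros Hm. apply ex_RInt_continuous_everywhere. intros; apply ellE_integrand_continuous, Hm. Qed.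

Lemma ellK_integrand_ge_1 m t : 0 <= m < 1 -> 1 <= ellK_integrand m t.
Proof.
  intros Hm. pose proof (ellE_integrand_pos m t (proj2 Hm)) as Hpos.
  pose proof (ellE_integrand_sqr m t (proj2 Hm)) as Hsqr. pose proof (sin_sqr_bound t).
  unfold ellK_integrand. fold (ellE_integrand m t).
  assert (ellE_integrand m t <= 1) by nra.
  apply (Rmult_le_reg_l (ellE_integrand m t)); [lra|]. rewrite Rinv_r; lra.
Qed.

Lemma ellK_integrand_mul_sin_sqr m t : m < 1 ->
  m * (ellK_integrand m t * sin t ^ 2) = ellK_integrand m t - ellE_integrand m t.
Proof.
  intros Hm. pose proof (ellE_integrand_pos m t Hm). pose proof (ellE_integrand_sqr m t Hm).
  unfold ellK_integrand. fold (ellE_integrand m t).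
  set (s := ellE_integrand m t) in *.
  replace (/ s - s) with ((1 - s * s) * / s) by (field; lra).
  replace (s * s) with (1 - m * sin t ^ 2). ring.
Qed.

Lemma is_derive_ellF m phi : m < 1 ->
  is_derive (fun phi => ellF phi m) phi (ellK_integrand m phi).
Proof.
  intros Hm. apply (is_derive_RInt (ellK_integrand m) (fun phi => ellF phi m) 0 phi).
  - apply filter_forall. intros. apply (RInt_correct (V := R_CompleteNormedModule)).
    apply ex_RInt_ellK_integrand, Hm.
  - apply ellK_integrand_continuous, Hm.
Qed.

Lemma ellF_continuity m : m < 1 -> continuity (fun phi => ellF phi m).
Proof.
  intros Hm x. apply continuity_pt_filterlim.
  apply (ex_derive_continuous (V := R_NormedModule) (fun phi => ellF phi m)).
  eexists. apply is_derive_ellF, Hm.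
Qed.

Lemma ellF_0 m : ellF 0 m = 0.
Proof. apply (RInt_point (V := R_CompleteNormedModule)). Qed.

Lemma ellF_increment m a b : 0 <= m < 1 -> a <= b -> b - a <= ellF b m - ellF a m.
Proof.
  intros Hm Hab.
  assert (Hsplit : ellF a m + RInt (ellK_integrand m) a b = ellF b m)
    by (apply (RInt_Chasles (V := R_CompleteNormedModule)); apply ex_RInt_ellK_integrand; lra).
  assert (Hle : RInt (fun _ => 1) a b <= RInt (ellK_integrand m) a b).
  { apply RInt_le; [exact Hab | apply ex_RInt_const | apply ex_RInt_ellK_integrand; lra |].
    intros; apply ellK_integrand_ge_1, Hm. }
  rewrite RInt_const in Hle. change (scal (b - a) 1) with ((b - a) * 1) in Hle. lra.
Qed.

Lemma dist_le_ellF_dist m a b : 0 <= m < 1 -> Rabs (a - b) <= Rabs (ellF a m - ellF b m).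
Proof.
  intros Hm. destruct (Rle_dec a b) as [Hab | Hab].
  - pose proof (ellF_increment m a b Hm Hab).
    rewrite (Rabs_left1 (a - b)), Rabs_left1; lra.
  - pose proof (ellF_increment m b a Hm ltac:(lra)).
    rewrite (Rabs_right (a - b)), Rabs_right; lra.
Qed.

Lemma ellF_surjective m u : 0 <= m < 1 -> exists phi, ellF phi m = u.
Proof.
  intros Hm. pose proof (Rabs_pos u). pose proof (Rle_abs u). pose proof (Rabs_maj2 u).
  pose proof (ellF_increment m 0 (Rabs u) Hm ltac:(lra)).
  pose proof (ellF_increment m (- Rabs u) 0 Hm ltac:(lra)).
  rewrite ellF_0 in *.
  destruct (IVT_gen (fun phi => ellF phi m) (- Rabs u) (Rabs u) u (ellF_continuity m (proj2 Hm)))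
    as [phi [_ Hphi]].
  - unfold Rmin, Rmax; destruct Rle_dec; lra.
  - exists phi; exact Hphi.
Qed.

Lemma ellF_jacobi_am u m : 0 <= m < 1 -> ellF (jacobi_am u m) m = u.
Proof.
  intros Hm. apply (epsilon_spec (inhabits 0) (fun phi => ellF phi m = u)).
  apply ellF_surjective, Hm.
Qed.

Lemma jacobi_am_ellF phi m : 0 <= m < 1 -> jacobi_am (ellF phi m) m = phi.
Proof.
  intros Hm. pose proof (dist_le_ellF_dist m (jacobi_am (ellF phi m) m) phi Hm) as H.
  rewrite ellF_jacobi_am, Rminus_diag, Rabs_R0 in H by exact Hm.
  pose proof (Rabs_pos (jacobi_am (ellF phi m) m - phi)).
  apply Rminus_diag_uniq, Rabs_eq_0. lra.
Qed.

Lemma jacobi_sn_continuous m u : 0 <= m < 1 -> continuous (fun u => jacobi_sn u m) u.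
Proof.
  intros Hm. apply (continuous_comp (fun u => jacobi_am u m) sin).
  - apply continuity_pt_filterlim. intros eps Heps. exists eps; split; [exact Heps|].
    intros v [_ Hv]. simpl in *. unfold R_dist in *.
    pose proof (dist_le_ellF_dist m (jacobi_am v m) (jacobi_am u m) Hm).
    rewrite !ellF_jacobi_am in * by exact Hm. lra.
  - apply continuity_pt_filterlim, continuity_sin.
Qed.

Lemma jacobi_sn_sqr_continuous m u : 0 <= m < 1 -> continuous (fun u => jacobi_sn u m ^ 2) u.
Proof.
  intros Hm. apply (continuous_comp (fun u => jacobi_sn u m) (fun y => y ^ 2)).
  - apply jacobi_sn_continuous, Hm.
  - apply (ex_derive_continuous (V := R_NormedModule)). auto_derive. exact I.
Qed.

Lemma RInt_0_PI_symmetric (h : R -> R) :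
  (forall t, h (PI - t) = h t) -> (forall t, continuous h t) ->
  RInt h 0 PI = 2 * RInt h 0 (PI / 2).
Proof.
  intros Hsym Hcont.
  assert (Hex : forall a b, ex_RInt h a b) by (intros; apply ex_RInt_continuous_everywhere, Hcont).
  assert (Hreflect : RInt (fun t => scal (-1) (h (-1 * t + PI))) (PI / 2) PI
                     = RInt h (-1 * (PI / 2) + PI) (-1 * PI + PI))
    by apply (RInt_comp_lin (V := R_CompleteNormedModule)), Hex.
  rewrite (RInt_ext _ (fun t => -1 * h t)), RInt_scal_R in Hreflect.
  - replace (-1 * (PI / 2) + PI) with (PI / 2) in Hreflect by field.
    replace (-1 * PI + PI) with 0 in Hreflect by ring.
    rewrite <- (opp_RInt_swap (V := R_CompleteNormedModule) h 0 (PI / 2) (Hex _ _)) in Hreflect.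
    rewrite <- (RInt_Chasles (V := R_CompleteNormedModule) h 0 (PI / 2) PI (Hex _ _) (Hex _ _)).
    change (opp ?x) with (- x) in Hreflect. change (plus ?x ?y) with (x + y). lra.
  - apply Hex.
  - intros t _. rewrite <- (Hsym t). replace (PI - t) with (-1 * t + PI) by ring. reflexivity.
Qed.

Lemma ellF_PI m : m < 1 -> ellF PI m = 2 * ellK m.
Proof.
  intros Hm. apply (RInt_0_PI_symmetric (ellK_integrand m)).
  - intros t. unfold ellK_integrand. rewrite sin_PI_x. reflexivity.
  - intros; apply ellK_integrand_continuous, Hm.
Qed.

Lemma RInt_ellE_integrand_0_PI m : m < 1 -> RInt (ellE_integrand m) 0 PI = 2 * ellE m.
Proof.
  intros Hm. apply (RInt_0_PI_symmetric (ellE_integrand m)).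
  - intros t. unfold ellE_integrand. rewrite sin_PI_x. reflexivity.
  - intros; apply ellE_integrand_continuous, Hm.
Qed.

Lemma ellK_ge_PI2 m : 0 <= m < 1 -> PI / 2 <= ellK m.
Proof.
  intros Hm. pose proof PI_RGT_0. pose proof (ellF_increment m 0 (PI / 2) Hm ltac:(lra)).
  rewrite ellF_0 in *. change (ellF (PI / 2) m) with (ellK m) in *. lra.
Qed.

(* Substituting [u = F(phi|m)], so that [sn u = sin phi] and [du = dphi / sqrt (1 - m sin^2 phi)]. *)
Lemma RInt_jacobi_sn_sqr m : 0 <= m < 1 ->
  m * RInt (fun u => jacobi_sn u m ^ 2) 0 (2 * ellK m) = 2 * ellK m - 2 * ellE m.
Proof.
  intros Hm.
  assert (Hsubst : RInt (fun phi => scal (ellK_integrand m phi) (jacobi_sn (ellF phi m) m ^ 2)) 0 PI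
                   = RInt (fun u => jacobi_sn u m ^ 2) (ellF 0 m) (ellF PI m)).
  { apply (RInt_comp (V := R_CompleteNormedModule) (fun u => jacobi_sn u m ^ 2)
             (fun phi => ellF phi m) (ellK_integrand m) 0 PI).
    - intros. apply jacobi_sn_sqr_continuous, Hm.
    - intros. split; [apply is_derive_ellF | apply ellK_integrand_continuous]; lra. }
  rewrite ellF_0, ellF_PI in Hsubst by lra. rewrite <- Hsubst.
  rewrite (RInt_ext _ (fun phi => ellK_integrand m phi * sin phi ^ 2))
    by (intros; unfold jacobi_sn; rewrite jacobi_am_ellF by exact Hm; reflexivity).
  rewrite <- RInt_scal_R.
  - rewrite <- ellF_PI, <- RInt_ellE_integrand_0_PI by lra.
    change (ellF PI m) with (RInt (ellK_integrand m) 0 PI).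
    rewrite <- (RInt_minus_R _ _ _ _ (ex_RInt_ellK_integrand m 0 PI ltac:(lra))
                  (ex_RInt_ellE_integrand m 0 PI ltac:(lra))).
    apply RInt_ext. intros phi _. apply ellK_integrand_mul_sin_sqr; lra.
  - apply ex_RInt_continuous_everywhere. intros phi.
    apply (continuous_mult (K := R_AbsRing)); [apply ellK_integrand_continuous; lra|].
    apply (ex_derive_continuous (V := R_NormedModule)). auto_derive. exact I.
Qed.

Lemma RInt_cnoidal c m V : 0 <= m < 1 ->
  RInt (fun x => cnoidal c m V x) 0 (2 * PI) =
  2 * PI * (c * ellK m ^ 2 / (3 * PI ^ 2)) * (V / 2 - (m + 1) / 3 + 1 - ellE m / ellK m).
Proof.
  intros Hm. pose proof (ellK_ge_PI2 m Hm). pose proof PI_RGT_0.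
  set (A := c * ellK m ^ 2 / (3 * PI ^ 2)). set (k := ellK m / PI).
  assert (Hsn : m * RInt (fun x => jacobi_sn (k * x) m ^ 2) 0 (2 * PI) = 2 * PI * (1 - ellE m / ellK m)).
  { apply (Rmult_eq_reg_l k); [| unfold k; apply Rgt_not_eq, Rdiv_lt_0_compat; lra].
    transitivity (m * (k * RInt (fun x => jacobi_sn (k * x) m ^ 2) 0 (2 * PI))); [ring|].
    rewrite (RInt_rescale (fun u => jacobi_sn u m ^ 2)) by (intros; apply jacobi_sn_sqr_continuous, Hm).
    replace (k * (2 * PI)) with (2 * ellK m) by (unfold k; field; lra).
    rewrite RInt_jacobi_sn_sqr by exact Hm. unfold k. field. lra. }
  rewrite (RInt_ext _ (fun x => A * (V / 2 - (m + 1) / 3) + A * m * jacobi_sn (k * x) m ^ 2))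
    by (intros; unfold cnoidal, A, k; change_to_R_eq; ring).
  rewrite RInt_const_add_scal.
  - change_to_R_eq. rewrite Rmult_assoc, Hsn. ring.
  - apply ex_RInt_continuous_everywhere. intros x.
    apply (continuous_comp (fun x => k * x) (fun u => jacobi_sn u m ^ 2)).
    + apply (ex_derive_continuous (V := R_NormedModule)). auto_derive. exact I.
    + apply jacobi_sn_sqr_continuous, Hm.
Qed.

Lemma cnoidal_mean_zero_iff c m V : c <> 0 -> 0 <= m < 1 ->
  (RInt (fun x => cnoidal c m V x) 0 (2 * PI) = 0 <-> V = V0 m).
Proof.
  intros Hc Hm. rewrite RInt_cnoidal by exact Hm.
  pose proof (ellK_ge_PI2 m Hm). pose proof PI_RGT_0.
  assert (Hscale : 2 * PI * (c * ellK m ^ 2 / (3 * PI ^ 2)) <> 0).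
  { replace (2 * PI * (c * ellK m ^ 2 / (3 * PI ^ 2))) with (c * (2 * ellK m ^ 2 / (3 * PI)))
      by (field; lra).
    apply Rmult_integral_contrapositive_currified; [exact Hc|].
    apply Rgt_not_eq, Rdiv_lt_0_compat; [apply Rmult_lt_0_compat; [lra | apply pow_lt] |]; lra. }
  unfold V0. split.
  - intros Hzero. apply Rmult_integral in Hzero as [Hzero | Hzero]; [contradiction|].
    unfold Rdiv in *. lra.
  - intros ->. change_to_R_eq. field. lra.
Qed.

Lemma ellE_decreasing m1 m2 : m1 < m2 < 1 -> ellE m2 < ellE m1.
Proof.
  intros Hm. pose proof PI_RGT_0.
  apply RInt_lt; [lra | intros; apply ellE_integrand_continuous; lra
                      | intros; apply ellE_integrand_continuous; lra |].
  intros t Ht. assert (0 < sin t ^ 2) by (apply pow_lt, sin_gt_0; lra).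
  unfold ellE_integrand. apply sqrt_lt_1_alt.
  pose proof (radicand_pos m2 t (proj2 Hm)). split; [lra | nra].
Qed.

Lemma ellK_nondecreasing m1 m2 : m1 <= m2 < 1 -> ellK m1 <= ellK m2.
Proof.
  intros Hm. pose proof PI_RGT_0.
  apply RInt_le; [lra | apply ex_RInt_ellK_integrand; lra | apply ex_RInt_ellK_integrand; lra |].
  intros t _. unfold ellK_integrand. pose proof (sin_sqr_bound t).
  apply Rinv_le_contravar; [apply ellE_integrand_pos; lra |].
  apply sqrt_le_1_alt. nra.
Qed.

Lemma ellE_nonneg m : m < 1 -> 0 <= ellE m.
Proof.
  intros Hm. pose proof PI_RGT_0.
  apply RInt_ge_0; [lra | apply ex_RInt_ellE_integrand, Hm |].
  intros; apply sqrt_pos.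
Qed.

Lemma ellE_div_ellK_decreasing m1 m2 : 0 <= m1 < m2 -> m2 < 1 ->
  ellE m2 / ellK m2 < ellE m1 / ellK m1.
Proof.
  intros H1 H2.
  pose proof (ellE_decreasing m1 m2 ltac:(lra)). pose proof (ellK_nondecreasing m1 m2 ltac:(lra)).
  pose proof (ellK_ge_PI2 m1 ltac:(lra)). pose proof (ellE_nonneg m1 ltac:(lra)). pose proof PI_RGT_0.
  apply Rlt_le_trans with (ellE m1 / ellK m2).
  - apply Rmult_lt_compat_r; [apply Rinv_0_lt_compat; lra | assumption].
  - apply Rmult_le_compat_l; [assumption | apply Rinv_le_contravar; lra].
Qed.

Lemma ellE_div_ellK_injective m1 m2 : 0 <= m1 < 1 -> 0 <= m2 < 1 ->
  ellE m1 / ellK m1 = ellE m2 / ellK m2 -> m1 = m2.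
Proof.
  intros Hm1 Hm2 Heq.
  destruct (Rtotal_order m1 m2) as [Hlt | [Heq' | Hgt]]; [| exact Heq' |].
  - pose proof (ellE_div_ellK_decreasing m1 m2 ltac:(lra) ltac:(lra)). lra.
  - pose proof (ellE_div_ellK_decreasing m2 m1 ltac:(lra) ltac:(lra)). lra.
Qed.

Lemma ellE_div_ellK_0 : ellE 0 / ellK 0 = 1.
Proof.
  pose proof PI_RGT_0. unfold ellE, ellK.
  rewrite (RInt_ext _ (fun _ => 1)), (RInt_ext (fun t => / _) (fun _ => 1)).
  - rewrite RInt_const. change (scal ?a ?b) with (a * b). field. lra.
  - intros; rewrite Rmult_0_l, Rminus_0_r, sqrt_1; apply Rinv_1.
  - intros; rewrite Rmult_0_l, Rminus_0_r, sqrt_1; reflexivity.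
Qed.

(* Pointwise, [(1 - m) / s < 2 s] with [s^2 = 1 - m sin^2 t], since [2 m sin^2 t <= 2 m < 1 + m]. *)
Lemma one_sub_mul_ellK_lt m : 0 <= m < 1 -> (1 - m) * ellK m < 2 * ellE m.
Proof.
  intros Hm. pose proof PI_RGT_0.
  unfold ellK, ellE. fold (ellK_integrand m). fold (ellE_integrand m).
  rewrite <- (RInt_scal_R _ _ _ _ (ex_RInt_ellK_integrand m 0 (PI / 2) (proj2 Hm))),
    <- (RInt_scal_R _ _ _ _ (ex_RInt_ellE_integrand m 0 (PI / 2) (proj2 Hm))).
  apply RInt_lt; [lra | | |].
  - intros. apply (continuous_scal_r (V := R_NormedModule) 2 (ellE_integrand m)).
    apply ellE_integrand_continuous; lra.
  - intros. apply (continuous_scal_r (V := R_NormedModule) (1 - m) (ellK_integrand m)).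
    apply ellK_integrand_continuous; lra.
  - intros t _. unfold ellK_integrand. fold (ellE_integrand m t).
    pose proof (ellE_integrand_pos m t (proj2 Hm)). pose proof (ellE_integrand_sqr m t (proj2 Hm)).
    pose proof (sin_sqr_bound t).
    apply (Rmult_lt_reg_r (ellE_integrand m t)); [lra|].
    rewrite Rmult_assoc, Rinv_l by lra.
    assert (m * sin t ^ 2 <= m) by nra. nra.
Qed.

Lemma V0_gt m : 0 <= m < 1 -> V0 m > - (m + 1) / 3.
Proof.
  intros Hm. pose proof (ellK_ge_PI2 m Hm). pose proof PI_RGT_0.
  pose proof (one_sub_mul_ellK_lt m Hm).
  unfold V0. apply Rlt_gt.
  apply (Rmult_lt_reg_r (ellK m)); [lra|].
  unfold Rdiv. rewrite Rmult_minus_distr_r, (Rmult_assoc (2 * ellE m)), Rinv_l by lra. lra.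
Qed.

Lemma V0_sub m : V0 m - (2 * m - 1) / 3 = 2 * (ellE m / ellK m - 1 / 2).
Proof. unfold V0, Rdiv. set (q := / ellK m). field. Qed.

Lemma dist_le_sqr_dist sa sb d : 0 < d -> d <= sa -> d <= sb ->
  Rabs (sa - sb) <= / (2 * d) * Rabs (sa * sa - sb * sb).
Proof.
  intros Hd Ha Hb.
  replace (sa * sa - sb * sb) with ((sa - sb) * (sa + sb)) by ring.
  rewrite Rabs_mult, (Rabs_right (sa + sb)) by lra.
  pose proof (Rabs_pos (sa - sb)).
  apply (Rmult_le_reg_l (2 * d)); [lra|].
  rewrite <- Rmult_assoc, Rinv_r, Rmult_1_l by lra. nra.
Qed.

Lemma inv_dist_le_sqr_dist sa sb d : 0 < d -> d <= sa -> d <= sb ->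
  Rabs (/ sa - / sb) <= / (2 * d ^ 3) * Rabs (sa * sa - sb * sb).
Proof.
  intros Hd Ha Hb. pose proof (dist_le_sqr_dist sa sb d Hd Ha Hb) as Hdist.
  replace (/ sa - / sb) with ((sb - sa) * / (sa * sb)) by (field; lra).
  rewrite Rabs_mult, <- Rabs_Ropp, Ropp_minus_distr, (Rabs_right (/ (sa * sb)))
    by (apply Rle_ge, Rlt_le, Rinv_0_lt_compat; nra).
  assert (Hinv : / (sa * sb) <= / (d * d)) by (apply Rinv_le_contravar; nra).
  apply Rle_trans with (Rabs (sa - sb) * / (d * d)).
  - apply Rmult_le_compat_l; [apply Rabs_pos | exact Hinv].
  - apply Rle_trans with (/ (2 * d) * Rabs (sa * sa - sb * sb) * / (d * d)).
    + apply Rmult_le_compat_r; [apply Rlt_le, Rinv_0_lt_compat; nra | exact Hdist].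
    + right. field. lra.
Qed.

Lemma sqrt_one_sub_le_ellE_integrand M m t : 0 <= M -> m <= M ->
  sqrt (1 - M) <= ellE_integrand m t.
Proof.
  intros HM Hm. pose proof (sin_sqr_bound t). apply sqrt_le_1_alt.
  destruct (Rle_dec 0 m); nra.
Qed.

Lemma ellE_integrand_sqr_dist a b t : a < 1 -> b < 1 ->
  Rabs (ellE_integrand a t * ellE_integrand a t - ellE_integrand b t * ellE_integrand b t)
  <= Rabs (a - b).
Proof.
  intros Ha Hb. rewrite !ellE_integrand_sqr by assumption.
  replace (1 - a * sin t ^ 2 - (1 - b * sin t ^ 2)) with ((a - b) * - sin t ^ 2) by ring.
  rewrite Rabs_mult, Rabs_Ropp, (Rabs_right (sin t ^ 2)) by (apply Rle_ge, sin_sqr_bound).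
  pose proof (Rabs_pos (a - b)). pose proof (sin_sqr_bound t). nra.
Qed.

Lemma ellE_integrand_lipschitz M a b t : 0 <= M < 1 -> a <= M -> b <= M ->
  Rabs (ellE_integrand a t - ellE_integrand b t) <= / (2 * sqrt (1 - M)) * Rabs (a - b).
Proof.
  intros HM Ha Hb. assert (Hd : 0 < sqrt (1 - M)) by (apply sqrt_lt_R0; lra).
  eapply Rle_trans.
  - apply dist_le_sqr_dist; [exact Hd | apply (sqrt_one_sub_le_ellE_integrand M); lra ..].
  - apply Rmult_le_compat_l; [apply Rlt_le, Rinv_0_lt_compat; lra|].
    apply ellE_integrand_sqr_dist; lra.
Qed.

Lemma ellK_integrand_lipschitz M a b t : 0 <= M < 1 -> a <= M -> b <= M ->
  Rabs (ellK_integrand a t - ellK_integrand b t) <= / (2 * sqrt (1 - M) ^ 3) * Rabs (a - b).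
Proof.
  intros HM Ha Hb. assert (Hd : 0 < sqrt (1 - M)) by (apply sqrt_lt_R0; lra).
  unfold ellK_integrand. fold (ellE_integrand a t) (ellE_integrand b t).
  eapply Rle_trans.
  - apply inv_dist_le_sqr_dist; [exact Hd | apply (sqrt_one_sub_le_ellE_integrand M); lra ..].
  - apply Rmult_le_compat_l; [apply Rlt_le, Rinv_0_lt_compat, Rmult_lt_0_compat, pow_lt; lra|].
    apply ellE_integrand_sqr_dist; lra.
Qed.

Lemma RInt_dist_le (f g : R -> R) lo hi C : lo <= hi -> ex_RInt f lo hi -> ex_RInt g lo hi ->
  (forall t, Rabs (f t - g t) <= C) -> Rabs (RInt f lo hi - RInt g lo hi) <= (hi - lo) * C.
Proof.
  intros Hlohi Hf Hg HC.
  rewrite <- (RInt_minus_R f g lo hi Hf Hg).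
  apply abs_RInt_le_const; [exact Hlohi | | intros; apply HC].
  apply (ex_RInt_minus (V := R_CompleteNormedModule)); assumption.
Qed.

Lemma continuity_pt_RInt_lipschitz (f : R -> R -> R) L M lo hi x : lo <= hi -> x < M ->
  (forall a, a <= M -> ex_RInt (f a) lo hi) ->
  (forall a b t, a <= M -> b <= M -> Rabs (f a t - f b t) <= L * Rabs (a - b)) ->
  continuity_pt (fun a => RInt (f a) lo hi) x.
Proof.
  intros Hlohi Hx Hex Hlip.
  set (C := (hi - lo) * L).
  assert (Hint : forall a, a <= M -> Rabs (RInt (f a) lo hi - RInt (f x) lo hi) <= C * Rabs (a - x)).
  { intros a Ha. unfold C. rewrite Rmult_assoc.
    apply RInt_dist_le; [exact Hlohi | apply Hex; lra .. | intros; apply Hlip; lra]. }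
  intros eps Heps.
  exists (Rmin (eps / (Rabs C + 1)) (M - x)). split.
  - apply Rmin_pos; [apply Rdiv_lt_0_compat; [| pose proof (Rabs_pos C)] |]; lra.
  - intros a [_ Ha]. simpl in *. unfold R_dist in *.
    pose proof (Rmin_l (eps / (Rabs C + 1)) (M - x)). pose proof (Rmin_r (eps / (Rabs C + 1)) (M - x)).
    pose proof (Rle_abs (a - x)). pose proof (Rabs_pos (a - x)). pose proof (Rle_abs C). pose proof (Rabs_pos C).
    eapply Rle_lt_trans; [apply Hint; lra|].
    apply Rle_lt_trans with ((Rabs C + 1) * Rabs (a - x)); [nra|].
    apply Rlt_le_trans with ((Rabs C + 1) * (eps / (Rabs C + 1))).
    + apply Rmult_lt_compat_l; lra.
    + right. field. lra.
Qed.

Lemma ellE_continuity_pt m : 0 <= m < 1 -> continuity_pt ellE m.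
Proof.
  intros Hm. pose proof PI_RGT_0.
  apply (continuity_pt_RInt_lipschitz ellE_integrand (/ (2 * sqrt (1 - (1 + m) / 2)))
           ((1 + m) / 2)); [lra | lra | intros; apply ex_RInt_ellE_integrand; lra |].
  intros. apply ellE_integrand_lipschitz; lra.
Qed.

Lemma ellK_continuity_pt m : 0 <= m < 1 -> continuity_pt ellK m.
Proof.
  intros Hm. pose proof PI_RGT_0.
  apply (continuity_pt_RInt_lipschitz ellK_integrand (/ (2 * sqrt (1 - (1 + m) / 2) ^ 3))
           ((1 + m) / 2)); [lra | lra | intros; apply ex_RInt_ellK_integrand; lra |].
  intros. apply ellK_integrand_lipschitz; lra.
Qed.

Lemma RInt_antiderivative (F f : R -> R) a b :
  (forall t, is_derive F t (f t)) -> (forall t, continuous f t) -> RInt f a b = F b - F a.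
Proof.
  intros HF Hf. apply (is_RInt_unique (V := R_CompleteNormedModule)).
  apply (is_RInt_derive (V := R_CompleteNormedModule)); auto.
Qed.

Lemma RInt_cos_add_mul_sin k : RInt (fun t => cos t + k * sin t) 0 (PI / 2) = 1 + k.
Proof.
  rewrite (RInt_antiderivative (fun t => sin t - k * cos t)).
  - rewrite sin_PI2, cos_PI2, sin_0, cos_0. change_to_R_eq. ring.
  - intros. auto_derive; [exact I|]. change_to_R_eq. ring.
  - intros. apply (ex_derive_continuous (V := R_NormedModule)). auto_derive. exact I.
Qed.

Lemma RInt_add_mul_sin_sqr a b :
  RInt (fun t => a + b * sin t ^ 2) 0 (PI / 2) = (a + b / 2) * (PI / 2).
Proof.
  rewrite (RInt_antiderivative (fun t => (a + b / 2) * t - b * sin t * cos t / 2)).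
  - rewrite sin_PI2, cos_PI2, sin_0, cos_0. change_to_R_eq. field.
  - intros t. auto_derive; [exact I|]. change_to_R_eq.
    pose proof (sin2 t) as Hsin2. unfold Rsqr in Hsin2.
    assert (b * (sin t * sin t) = b * (1 - cos t * cos t)) by (rewrite Hsin2; reflexivity).
    simpl. lra.
  - intros. apply (ex_derive_continuous (V := R_NormedModule)). auto_derive. exact I.
Qed.

(* On [0, pi/2], [1 - m sin^2 t = cos^2 t + (1 - m) sin^2 t <= (cos t + k sin t)^2]. *)
Lemma ellE_le m k : m < 1 -> 0 <= k -> 1 - m <= k ^ 2 -> ellE m <= 1 + k.
Proof.
  intros Hm Hk Hmk. pose proof PI_RGT_0.
  rewrite <- RInt_cos_add_mul_sin.
  apply RInt_le; [lra | apply ex_RInt_ellE_integrand, Hm | |].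
  - apply ex_RInt_continuous_everywhere. intros.
    apply (ex_derive_continuous (V := R_NormedModule)). auto_derive. exact I.
  - intros t Ht.
    assert (0 <= sin t) by (apply sin_ge_0; lra). assert (0 <= cos t) by (apply cos_ge_0; lra).
    pose proof (sin2 t) as Hsin2. unfold Rsqr in Hsin2.
    unfold ellE_integrand. rewrite <- (sqrt_Rsqr (cos t + k * sin t)) by nra.
    apply sqrt_le_1_alt. unfold Rsqr.
    assert (0 <= k * sin t * cos t) by (apply Rmult_le_pos; [apply Rmult_le_pos|]; assumption).
    assert ((1 - m) * (sin t * sin t) <= k ^ 2 * (sin t * sin t))
      by (apply Rmult_le_compat_r; [apply Rle_0_sqr | exact Hmk]).
    simpl in *. nra.
Qed.

(* Tangent-line bound [1 / s >= (3 c^2 - s^2) / (2 c^3)], i.e. [(s - c)^2 (s + 2 c) >= 0]. *)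
Lemma ellK_ge m c : 0 <= m < 1 -> 0 < c ->
  (3 * c ^ 2 - 1 + m / 2) * (PI / 2) / (2 * c ^ 3) <= ellK m.
Proof.
  intros Hm Hc. pose proof PI_RGT_0.
  replace ((3 * c ^ 2 - 1 + m / 2) * (PI / 2) / (2 * c ^ 3))
    with (((3 * c ^ 2 - 1) / (2 * c ^ 3) + m / (2 * c ^ 3) / 2) * (PI / 2)) by (field; lra).
  rewrite <- RInt_add_mul_sin_sqr.
  apply RInt_le; [lra | | apply ex_RInt_ellK_integrand; lra |].
  - apply ex_RInt_continuous_everywhere. intros.
    apply (ex_derive_continuous (V := R_NormedModule)). auto_derive. exact I.
  - intros t _. unfold ellK_integrand. fold (ellE_integrand m t).
    pose proof (ellE_integrand_pos m t (proj2 Hm)) as Hs.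
    pose proof (ellE_integrand_sqr m t (proj2 Hm)) as Hsqr.
    set (s := ellE_integrand m t) in *.
    replace ((3 * c ^ 2 - 1) / (2 * c ^ 3) + m / (2 * c ^ 3) * sin t ^ 2)
      with ((3 * c ^ 2 - s * s) / (2 * c ^ 3)) by (rewrite Hsqr; field; lra).
    assert (Hc3 : 0 < c ^ 3) by (apply pow_lt, Hc).
    apply (Rmult_le_reg_r (s * (2 * c ^ 3))); [nra|].
    replace ((3 * c ^ 2 - s * s) / (2 * c ^ 3) * (s * (2 * c ^ 3))) with ((3 * c ^ 2 - s * s) * s)
      by (field; lra).
    replace (/ s * (s * (2 * c ^ 3))) with (2 * c ^ 3) by (field; lra).
    assert (0 <= (s - c) ^ 2 * (s + 2 * c)) by (apply Rmult_le_pos; [apply pow2_ge_0 | lra]).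
    nra.
Qed.

Lemma ellE_div_ellK_lt_half : ellE (999 / 1000) / ellK (999 / 1000) < 1 / 2.
Proof.
  pose proof (ellE_le (999 / 1000) (1 / 25) ltac:(lra) ltac:(lra) ltac:(lra)).
  pose proof (ellK_ge (999 / 1000) (7 / 10) ltac:(lra) ltac:(lra)).
  pose proof PI2_3_2.
  assert (HK : 2 * (1 + 1 / 25) < ellK (999 / 1000)) by lra.
  apply (Rmult_lt_reg_r (ellK (999 / 1000))); [lra|].
  unfold Rdiv at 1. rewrite Rmult_assoc, Rinv_l by lra. lra.
Qed.

Lemma ellE_div_ellK_continuity_pt m : 0 <= m < 1 -> continuity_pt (fun m => ellE m / ellK m) m.
Proof.
  intros Hm. pose proof (ellK_ge_PI2 m Hm). pose proof PI_RGT_0.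
  apply continuity_pt_div; [apply ellE_continuity_pt, Hm | apply ellK_continuity_pt, Hm | lra].
Qed.

Lemma exists_ellE_div_ellK_half : exists mstar, 0 < mstar < 999 / 1000 /\ ellE mstar / ellK mstar = 1 / 2.
Proof.
  destruct (Ranalysis5.IVT_interv (fun m => 1 / 2 - ellE m / ellK m) 0 (999 / 1000))
    as [mstar [Hmstar Hhalf]].
  - intros m Hm. apply continuity_pt_minus; [apply continuity_pt_const; intros ? ?; reflexivity|].
    apply ellE_div_ellK_continuity_pt. lra.
  - lra.
  - rewrite ellE_div_ellK_0. lra.
  - pose proof ellE_div_ellK_lt_half. lra.
  - exists mstar. destruct (Req_dec mstar 0) as [-> | Hne]; [rewrite ellE_div_ellK_0 in Hhalf; lra|].
    destruct (Req_dec mstar (999 / 1000)) as [-> | Hne']; [pose proof ellE_div_ellK_lt_half; lra|].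
    split; lra.
Qed.

Theorem mainTheorem8 :
  (forall c m V : R, c <> 0 -> 0 <= m < 1 ->
     (RInt (fun x => cnoidal c m V x) 0 (2 * PI) = 0 <-> V = V0 m)) /\
  (exists mstar : R,
     0 < mstar < 1 /\
     ellE mstar / ellK mstar = 1 / 2 /\
     (forall m : R, 0 < m < 1 -> ellE m / ellK m = 1 / 2 -> m = mstar) /\
     (forall m : R, 0 <= m < 1 -> V0 m > - (m + 1) / 3) /\
     (forall m : R, 0 <= m < 1 -> (V0 m = (2 * m - 1) / 3 <-> m = mstar)) /\
     (forall m : R, mstar < m < 1 -> V0 m < (2 * m - 1) / 3)).
Proof.
  split; [exact cnoidal_mean_zero_iff|].
  destruct exists_ellE_div_ellK_half as [mstar [Hmstar Hhalf]].
  assert (Hunique : forall m, 0 <= m < 1 -> ellE m / ellK m = 1 / 2 -> m = mstar)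
    by (intros m Hm Hm_half; apply ellE_div_ellK_injective; lra).
  exists mstar. split; [lra|]. split; [exact Hhalf|]. split.
  { intros m Hm. apply Hunique. lra. }
  split; [exact V0_gt|]. split.
  - intros m Hm. pose proof (V0_sub m). split.
    + intros Hline. apply Hunique; lra.
    + intros ->. lra.
  - intros m Hm. pose proof (V0_sub m).
    pose proof (ellE_div_ellK_decreasing mstar m ltac:(lra) ltac:(lra)). lra.
Qed.
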